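(* Let $\{\boldsymbol{Y}_n\}=\{(X_{1,n},X_{2,n},J_n)\}$ be a two-dimensional skip-free Markov modulated random walk as described in the context, which is irreducible and aperiodic. If $a_1<0$ or $a_2<0$, then for every $\boldsymbol{y}\in\mathbb{S}_+$ the occupation measure $(\tilde q_{\boldsymbol{y},\boldsymbol{y}'};\boldsymbol{y}'\in\mathbb{S}_+)$ is finite, i.e. $$\sum_{\boldsymbol{y}'\in\mathbb{S}_+}\tilde q_{\boldsymbol{y},\boldsymbol{y}'}=\mathbb{E}(\tau\mid \boldsymbol{Y}_0=\boldsymbol{y})<\infty .$$
   Context: Let $S_0=\{1,\dots,s_0\}$ be a finite set. The process $\{\boldsymbol{Y}_n\}=\{(X_{1,n},X_{2,n},J_n)\}$ is a discrete-time Markov chain on $\mathbb{S}=\mathbb{Z}^2\times S_0$ with space-homogeneous skip-free transitions: there are nonnegative $s_0\times s_0$ matrices $A_{k,l}$, $k,l\in\{-1,0,1\}$, with $\sum_{k,l}A_{k,l}$ stochastic, such that $\mathbb{P}(\boldsymbol{Y}_{n+1}=(x_1+k,x_2+l,j')\mid\boldsymbol{Y}_n=(x_1,x_2,j))=[A_{k,l}]_{j,j'}$ for all $(x_1,x_2)\in\mathbb{Z}^2$, $k,l\in\{-1,0,1\}$, $j,j'\in S_0$ (all other transitions have probability $0$). Let $\mathbb{Z}_+$ be the nonnegative integers, $\mathbb{S}_+=\mathbb{Z}_+^2\times S_0$, $\tau=\inf\{n\ge 0:\boldsymbol{Y}_n\in\mathbb{S}\setminus\mathbb{S}_+\}$,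 and for $\boldsymbol{y},\boldsymbol{y}'\in\mathbb{S}_+$, $\tilde q_{\boldsymbol{y},\boldsymbol{y}'}=\mathbb{E}\big(\sum_{n=0}^{\tau-1}1(\boldsymbol{Y}_n=\boldsymbol{y}')\mid\boldsymbol{Y}_0=\boldsymbol{y}\big)$. Let $A_{*,*}=\sum_{k,l}A_{k,l}$ (the transition matrix of the background process), $\boldsymbol{\pi}_{*,*}$ its stationary distribution, $A_{i,*}=\sum_{k}A_{i,k}$, $A_{*,j}=\sum_k A_{k,j}$, and define $a_1=\boldsymbol{\pi}_{*,*}(-A_{-1,*}+A_{1,*})\mathbf{1}$, $a_2=\boldsymbol{\pi}_{*,*}(-A_{*,-1}+A_{*,1})\mathbf{1}$, where $\mathbf 1$ is the all-ones column vector. *)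

From mathcomp Require Import all_boot all_order all_algebra.
From mathcomp Require Import all_classical all_reals all_analysis.
Set Implicit Arguments. Unset Strict Implicit. Unset Printing Implicit Defensive.
Import Order.TTheory GRing.Theory Num.Theory.
Local Open Scope ring_scope.

Definition state (s0 : nat) := (int * int * 'I_s0)%type.

(* Index i : 'I_3 encodes the jump size i - 1 in {-1,0,1}. *)
Definition stp (i : 'I_3) : int := (i%:Z - 1)%R.
Definition im1 : 'I_3 := ord0.
Definition ip1 : 'I_3 := ord_max.

Definition inSp (s0 : nat) (y : state s0) : bool := (0 <= y.1.1) && (0 <= y.1.2).

(* A k l plays the role of A_{stp k, stp l}. *)

Fixpoint pn (R : realType) (s0 : nat) (A : 'I_3 -> 'I_3 -> 'M[R]_s0)
  (n : nat) (y y' : state s0) {struct n} : R :=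
  match n with
  | 0 => if y == y' then 1 else 0
  | m.+1 => \sum_(k : 'I_3) \sum_(l : 'I_3) \sum_(j : 'I_s0)
              A k l y.2 j * pn A m (y.1.1 + stp k, y.1.2 + stp l, j) y'
  end.

(* P(Y_n = y', n < tau | Y_0 = y) : probability of being at y' at time n
   without having left S_+ at times 0..n. *)
Fixpoint killed_pn (R : realType) (s0 : nat) (A : 'I_3 -> 'I_3 -> 'M[R]_s0)
  (n : nat) (y y' : state s0) {struct n} : R :=
  match n with
  | 0 => if inSp y && (y == y') then 1 else 0
  | m.+1 => if inSp y then
              \sum_(k : 'I_3) \sum_(l : 'I_3) \sum_(j : 'I_s0)
                A k l y.2 j * killed_pn A m (y.1.1 + stp k, y.1.2 + stp l, j) y'
            else 0
  end.

(* Occupation measure q~_{y,y'} = E(sum_{n<tau} 1(Y_n = y') | Y_0 = y)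
   = sum_n P(Y_n = y', n < tau | Y_0 = y), an extended nonnegative real. *)
Definition qtilde (R : realType) (s0 : nat) (A : 'I_3 -> 'I_3 -> 'M[R]_s0)
  (y y' : state s0) : \bar R :=
  (\sum_(0 <= n <oo) (killed_pn A n y y')%:E)%E.

Definition irreducible_mmrw (R : realType) (s0 : nat) (A : 'I_3 -> 'I_3 -> 'M[R]_s0) : Prop :=
  forall y y' : state s0, exists n, 0 < pn A n y y'.

Definition aperiodic_mmrw (R : realType) (s0 : nat) (A : 'I_3 -> 'I_3 -> 'M[R]_s0) : Prop :=
  forall (y : state s0) (d : nat),
    (forall n : nat, (0 < n)%N -> 0 < pn A n y y -> (d %| n)%N) -> d = 1%N.

Definition Astar (R : realType) (s0 : nat) (A : 'I_3 -> 'I_3 -> 'M[R]_s0) : 'M[R]_s0 :=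
  \sum_(k : 'I_3) \sum_(l : 'I_3) A k l.
Definition Arow (R : realType) (s0 : nat) (A : 'I_3 -> 'I_3 -> 'M[R]_s0) (i : 'I_3) : 'M[R]_s0 :=
  \sum_(l : 'I_3) A i l.
Definition Acol (R : realType) (s0 : nat) (A : 'I_3 -> 'I_3 -> 'M[R]_s0) (j : 'I_3) : 'M[R]_s0 :=
  \sum_(k : 'I_3) A k j.

Definition drift1 (R : realType) (s0 : nat) (A : 'I_3 -> 'I_3 -> 'M[R]_s0) (pi : 'rV[R]_s0) : R :=
  (pi *m (- Arow A im1 + Arow A ip1) *m (const_mx 1 : 'cV[R]_s0)) 0 0.
Definition drift2 (R : realType) (s0 : nat) (A : 'I_3 -> 'I_3 -> 'M[R]_s0) (pi : 'rV[R]_s0) : R :=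
  (pi *m (- Acol A im1 + Acol A ip1) *m (const_mx 1 : 'cV[R]_s0)) 0 0.

From mathcomp Require Import all_boot all_order all_algebra.
From mathcomp Require Import all_classical all_reals all_analysis.
From mathcomp Require Import ring lra zify.
Import Order.TTheory GRing.Theory Num.Theory.
Local Open Scope ring_scope.
Set Implicit Arguments. Unset Strict Implicit.

(* Say a1 < 0, the case a2 < 0 being symmetric. With the drift matrix
   D = - A_{-1,*} + A_{1,*} we have pi (D 1 - a1 1) = 0, and pi spans the
   invariant measures of the irreducible background matrix A_{*,*}, so the
   Poisson equation (I - A_{*,*}) h = D 1 - a1 1 has a solution h. Then
   f(x1, x2, j) = x1 + h_j satisfies E(f(Y_1) | Y_0 = y) = f(y) + a1, hence
   E f(Y_{n /\ tau}) = f(y) + a1 E(n /\ tau). Since f is bounded below on S_+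
   and on the points one step away from it, E(n /\ tau) stays bounded by
   (f(y) - inf f) / (- a1), and E(tau) = sum_n P(tau > n) is finite. *)

Definition irreducible_mx (R : numDomainType) n (P : 'M[R]_n) :=
  forall S : {set 'I_n}, (forall i j, i \in S -> 0 < P i j -> j \in S) ->
  forall i j, i \in S -> j \in S.

Section StochasticMatrix.
Variables (R : realFieldType) (n : nat) (P : 'M[R]_n).
Hypotheses (P_ge0 : forall i j, 0 <= P i j) (P_row1 : forall i, \sum_j P i j = 1).
Hypothesis P_irr : irreducible_mx P.

Lemma harmonic_cV_const (u : 'cV[R]_n) : P *m u = u -> forall i j, u i 0 = u j 0.
Proof.
move=> Pu i j.
have [m u_max] : exists m, forall k, u k 0 <= u m 0.
  case: (@Order.TotalTheory.arg_maxP _ _ _ i xpredT (fun k => u k 0) isT) => m _ H.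
  by exists m => k; apply: H.
pose S := [set k | u k 0 == u m 0].
(* At a maximum point u is a P-average of values at most the maximum. *)
have S_closed a b : a \in S -> 0 < P a b -> b \in S.
  rewrite !inE => /eqP ua Pab.
  have avg : \sum_k P a k * (u m 0 - u k 0) = 0.
    under eq_bigr do rewrite mulrBr.
    rewrite sumrB -mulr_suml P_row1 mul1r.
    have := congr1 (fun M : 'cV_n => M a 0) Pu; rewrite mxE => ->.
    by rewrite ua subrr.
  have terms_ge0 k : true -> 0 <= P a k * (u m 0 - u k 0).
    by move=> _; rewrite mulr_ge0 // subr_ge0.
  move: avg => /(psumr_eq0P terms_ge0) /(_ b isT) /eqP.
  by rewrite mulf_eq0 (gt_eqF Pab) /= subr_eq0 eq_sym.
have mS : m \in S by rewrite inE.
have := @P_irr S S_closed m i mS; have := @P_irr S S_closed m j mS.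
by rewrite !inE => /eqP -> /eqP ->.
Qed.

(* By the previous lemma ker (1 - P) is the line of constants, so (1 - P)^T
   has corank one and its row space is the annihilator of pi. *)
Lemma poisson_solvable (pi : 'rV[R]_n) (g : 'cV[R]_n) :
  pi != 0 -> pi *m P = pi -> pi *m g = 0 -> exists h : 'cV_n, (1%:M - P) *m h = g.
Proof.
move=> pi_neq0 piP pig.
pose B := (1%:M - P)^T.
have kerB : (kermx B <= (const_mx 1 : 'rV[R]_n))%MS.
  apply/row_subP => k.
  set r := row k (kermx B).
  have Pr : P *m r^T = r^T.
    have rB : r *m B = 0 by rewrite /r -row_mul mulmx_ker row0.
    have := congr1 trmx rB; rewrite trmx_mul /B trmxK trmx0 mulmxBl mul1mx.
    by move/eqP; rewrite subr_eq0 eq_sym => /eqP.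
  apply/submxP; exists ((r 0 k)%:M).
  apply/rowP => j; rewrite mul_scalar_mx !mxE.
  by have := harmonic_cV_const Pr j k; rewrite !mxE => ->; rewrite mulr1.
have rkB : (n - \rank B <= 1)%N.
  by rewrite -mxrank_ker; apply: leq_trans (mxrankS kerB) (rank_leq_row _).
pose K := kermx pi^T.
have rk_piT : \rank pi^T = 1%N.
  apply/eqP; rewrite eqn_leq rank_leq_col lt0n mxrank_eq0.
  by apply: contra pi_neq0 => /eqP/(congr1 trmx); rewrite trmxK trmx0 => ->.
have BK : (B <= K)%MS.
  by apply/sub_kermxP; rewrite /B -trmx_mul mulmxBr mulmx1 piP subrr trmx0.
have KB : (K <= B)%MS.
  have rkK : \rank K = (n - 1)%N by rewrite mxrank_ker rk_piT.
  have eBK : (B == K)%MS by rewrite -(mxrank_leqif_eq BK).2 eqn_leq mxrankS // rkK; lia.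
  by move/eqmxP: eBK => ->.
have gK : (g^T <= K)%MS by apply/sub_kermxP; rewrite -trmx_mul pig trmx0.
have /submxP [u gu] := submx_trans gK KB.
by exists u^T; have := congr1 trmx gu; rewrite trmxK trmx_mul /B trmxK => <-.
Qed.

Lemma poisson_centered (pi : 'rV[R]_n) (v : 'cV[R]_n) :
  \sum_j pi 0 j = 1 -> pi *m P = pi ->
  exists h : 'cV[R]_n, forall i, h i 0 - \sum_j P i j * h j 0 = v i 0 - (pi *m v) 0 0.
Proof.
move=> pi1 piP.
pose c := (pi *m v) 0 0.
pose g := v - c *: const_mx 1.
have pi_neq0 : pi != 0.
  apply/eqP => pi0; move: pi1; rewrite pi0 big1 => [/eqP|j _]; last by rewrite mxE.
  by rewrite eq_sym oner_eq0.
have pi_mass : \sum_j pi 0 j * (const_mx 1 : 'cV[R]_n) j 0 = 1.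
  by rewrite -[RHS]pi1; apply: eq_bigr => j _; rewrite mxE mulr1.
have pig : pi *m g = 0.
  by apply/rowP => i; rewrite ord1 mulmxBr -scalemxAr !mxE pi_mass mulr1 /c mxE subrr.
have [h hh] := poisson_solvable pi_neq0 piP pig.
exists h => i; rewrite -/c.
have := congr1 (fun M : 'cV_n => M i 0) hh.
by rewrite mulmxBl mul1mx /g !mxE mulr1 => ->.
Qed.

End StochasticMatrix.

Lemma exchange_big3 (V : nmodType) (I J K : finType) (F : I -> J -> K -> V) :
  \sum_i \sum_j \sum_k F i j k = \sum_k \sum_i \sum_j F i j k.
Proof. by rewrite [RHS]exchange_big; apply: eq_bigr => i _; exact: exchange_big. Qed.

Lemma big_split3 (V : nmodType) (I J K : finType) (F G : I -> J -> K -> V) :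
  \sum_i \sum_j \sum_k (F i j k + G i j k) =
  \sum_i \sum_j \sum_k F i j k + \sum_i \sum_j \sum_k G i j k.
Proof.
rewrite -big_split; apply: eq_bigr => i _.
rewrite -big_split; apply: eq_bigr => j _.
by rewrite -big_split.
Qed.

Lemma stp_geN1 (k : 'I_3) : -1 <= stp k.
Proof. rewrite /stp; lia. Qed.

Lemma stp_weights (R : pzRingType) (V : lmodType R) (F : 'I_3 -> V) :
  - F im1 + F ip1 = \sum_k (stp k)%:~R *: F k.
Proof.
have -> : ip1 = lift ord0 (lift ord0 ord0) by apply: val_inj.
rewrite !big_ord_recl big_ord0.
have -> : stp ord0 = -1 by [].
have -> : stp (lift ord0 ord0) = 0 by [].
have -> : stp (lift ord0 (lift ord0 ord0)) = 1 by [].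
by rewrite !scaler_int mulrN1z mulr0z mulr1z add0r addr0.
Qed.

Section KilledWalk.
Variables (R : realType) (s0 : nat) (A : 'I_3 -> 'I_3 -> 'M[R]_s0).
Hypothesis A_ge0 : forall (k l : 'I_3) (i j : 'I_s0), 0 <= A k l i j.
Hypothesis A_row1 : forall i : 'I_s0, \sum_(j : 'I_s0) Astar A i j = 1.

Lemma Astar_entry i j : Astar A i j = \sum_k \sum_l A k l i j.
Proof. by rewrite /Astar summxE; apply: eq_bigr => k _; rewrite summxE. Qed.

Lemma Astar_ge0 i j : 0 <= Astar A i j.
Proof. by rewrite Astar_entry; apply: sumr_ge0 => k _; apply: sumr_ge0. Qed.

Lemma Astar_eq0 i j : Astar A i j = 0 -> forall k l, A k l i j = 0.
Proof.
move=> A0 k l; move: A0; rewrite Astar_entry.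
have row_ge0 k' : true -> 0 <= \sum_l' A k' l' i j by move=> _; apply: sumr_ge0.
move=> /(psumr_eq0P row_ge0) /(_ k isT).
have entry_ge0 l' : true -> 0 <= A k l' i j by [].
by move=> /(psumr_eq0P entry_ge0) /(_ l isT).
Qed.

Lemma A_mass i : \sum_k \sum_l \sum_j A k l i j = 1.
Proof.
rewrite exchange_big3 -[RHS](A_row1 i).
by apply: eq_bigr => j _; rewrite Astar_entry.
Qed.

Lemma row_drift_mxE i j :
  (- Arow A im1 + Arow A ip1) i j = \sum_k \sum_l (stp k)%:~R * A k l i j.
Proof.
rewrite stp_weights summxE; apply: eq_bigr => k _.
by rewrite mxE /Arow summxE mulr_sumr.
Qed.

Lemma col_drift_mxE i j :
  (- Acol A im1 + Acol A ip1) i j = \sum_k \sum_l (stp l)%:~R * A k l i j.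
Proof.
rewrite stp_weights summxE exchange_big; apply: eq_bigr => l _.
by rewrite mxE /Acol summxE mulr_sumr.
Qed.

Lemma pn_closed_eq0 (S : {set 'I_s0}) :
  (forall i j, i \in S -> 0 < Astar A i j -> j \in S) ->
  forall n (y y' : state s0), y.2 \in S -> y'.2 \notin S -> pn A n y y' = 0.
Proof.
move=> S_closed; elim=> [|n IH] y y' yS y'S /=.
  by case: eqP => // e; move: y'S; rewrite -e yS.
apply: big1 => k _; apply: big1 => l _; apply: big1 => j _.
have [jS|jS] := boolP (j \in S); first by rewrite IH ?mulr0.
have : Astar A y.2 j = 0.
  apply/eqP; rewrite eq_le Astar_ge0 andbT leNgt.
  by apply/negP => /(S_closed _ _ yS); rewrite (negbTE jS).
by move/Astar_eq0 => ->; rewrite mul0r.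
Qed.

Lemma irreducible_background : irreducible_mmrw A -> irreducible_mx (Astar A).
Proof.
move=> hirr S S_closed i j iS; apply/negPn/negP => jS.
have [n] := hirr ((0 : int), (0 : int), i) ((0 : int), (0 : int), j).
by rewrite (pn_closed_eq0 S_closed) ?ltxx.
Qed.

Definition shift (y : state s0) (k l : 'I_3) (j : 'I_s0) : state s0 :=
  (y.1.1 + stp k, y.1.2 + stp l, j).

Definition step_mean (f : state s0 -> R) (y : state s0) : R :=
  \sum_(k : 'I_3) \sum_(l : 'I_3) \sum_(j : 'I_s0) A k l y.2 j * f (shift y k l j).

Lemma step_meanD f g y :
  step_mean (fun z => f z + g z) y = step_mean f y + step_mean g y.
Proof.
rewrite /step_mean -big_split3.
by apply: eq_bigr => k _; apply: eq_bigr => l _; apply: eq_bigr => j _; rewrite mulrDr.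
Qed.

Lemma step_meanZ c f y : step_mean (fun z => c * f z) y = c * step_mean f y.
Proof.
rewrite /step_mean mulr_sumr; apply: eq_bigr => k _.
rewrite mulr_sumr; apply: eq_bigr => l _.
by rewrite mulr_sumr; apply: eq_bigr => j _; rewrite mulrCA.
Qed.

Lemma step_mean_sum (I : Type) (r : seq I) (F : I -> state s0 -> R) y :
  step_mean (fun z => \sum_(i <- r) F i z) y = \sum_(i <- r) step_mean (F i) y.
Proof.
rewrite /step_mean [RHS]exchange_big; apply: eq_bigr => k _.
rewrite [RHS]exchange_big; apply: eq_bigr => l _.
by rewrite [RHS]exchange_big; apply: eq_bigr => j _; rewrite mulr_sumr.
Qed.

Lemma step_mean_cst c y : step_mean (fun=> c) y = c.
Proof.
rewrite /step_mean -[RHS]mul1r -(A_mass y.2) mulr_suml; apply: eq_bigr => k _.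
by rewrite mulr_suml; apply: eq_bigr => l _; rewrite mulr_suml.
Qed.

Lemma ler_step_mean f g y :
  (forall k l j, f (shift y k l j) <= g (shift y k l j)) -> step_mean f y <= step_mean g y.
Proof.
move=> fg; apply: ler_sum => k _; apply: ler_sum => l _; apply: ler_sum => j _.
exact: ler_wpM2l.
Qed.

Lemma step_mean_increment (c : state s0 -> R) (d : 'I_3 -> 'I_3 -> R) y :
  (forall k l j, c (shift y k l j) = c y + d k l) ->
  step_mean c y = c y + \sum_j \sum_k \sum_l d k l * A k l y.2 j.
Proof.
move=> hc; rewrite /step_mean.
under eq_bigr do under eq_bigr do under eq_bigr do rewrite hc mulrDr.
rewrite big_split3; congr (_ + _); first exact: (step_mean_cst (c y) y).
rewrite exchange_big3.
by apply: eq_bigr => j _; apply: eq_bigr => k _; apply: eq_bigr => l _; rewrite mulrC.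
Qed.

Lemma step_mean_background (h : 'cV[R]_s0) y :
  step_mean (fun z => h z.2 0) y = \sum_j Astar A y.2 j * h j 0.
Proof.
rewrite /step_mean exchange_big3; apply: eq_bigr => j _.
by rewrite Astar_entry mulr_suml; apply: eq_bigr => k _; rewrite mulr_suml.
Qed.

(* survival n y = P(tau > n | Y_0 = y) *)
Fixpoint survival (n : nat) (y : state s0) : R :=
  if inSp y then (if n is m.+1 then step_mean (survival m) y else 1) else 0.

Lemma survival_out n y : inSp y = false -> survival n y = 0.
Proof. by case: n => [|n] /= ->. Qed.

Lemma survival0 y : inSp y -> survival 0 y = 1.
Proof. by move=> /= ->. Qed.

Lemma survivalS n y : inSp y -> survival n.+1 y = step_mean (survival n) y.
Proof. by move=> /= ->. Qed.

Lemma killed_pnS n y y' :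
  inSp y -> killed_pn A n.+1 y y' = step_mean (fun z => killed_pn A n z y') y.
Proof. by move=> /= ->. Qed.

Lemma killed_pn_ge0 n y y' : 0 <= killed_pn A n y y'.
Proof.
elim: n y => [|n IH] y /=; first by case: ifP.
case: ifP => // _; apply: sumr_ge0 => k _; apply: sumr_ge0 => l _; apply: sumr_ge0 => j _.
exact: mulr_ge0.
Qed.

Lemma sum_killed_pn_le_survival n y (s : seq (state s0)) :
  uniq s -> \sum_(y' <- s) killed_pn A n y y' <= survival n y.
Proof.
move=> s_uniq; elim: n y => [|n IH] y.
  rewrite /=; case: ifP => Sy /=; last by rewrite big1.
  rewrite -big_mkcond /= big_const_seq iter_addr addr0.
  rewrite (@eq_count _ _ (pred1 y)); last by move=> x; exact: eq_sym.
  by rewrite count_uniq_mem //; case: (y \in s).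
case Sy: (inSp y); last by rewrite survival_out // big1 // => y' _; rewrite /= Sy.
rewrite survivalS //; under eq_bigr do rewrite killed_pnS //.
by rewrite -step_mean_sum; apply: ler_step_mean => k l j; exact: IH.
Qed.

(* stopped_mean f n y = E(f(Y_{n /\ tau}) | Y_0 = y) *)
Fixpoint stopped_mean (f : state s0 -> R) (n : nat) (y : state s0) : R :=
  if n is m.+1 then (if inSp y then step_mean (stopped_mean f m) y else f y) else f y.

Lemma stopped_mean_out f n y : inSp y = false -> stopped_mean f n y = f y.
Proof. by case: n => [|n] //= ->. Qed.

Lemma stopped_mean_drift f a :
  (forall y, inSp y -> step_mean f y = f y + a) ->
  forall n y, stopped_mean f n y = f y + a * \sum_(m < n) survival m y.
Proof.
move=> f_drift; elim=> [|n IH] y /=; first by rewrite big_ord0 mulr0 addr0.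
case: ifP => Sy; last by rewrite big1 ?mulr0 ?addr0 // => m _; rewrite survival_out.
have -> : stopped_mean f n = fun z => f z + a * \sum_(m < n) survival m z.
  by apply/funext => z; exact: IH.
rewrite step_meanD step_meanZ step_mean_sum f_drift //.
rewrite big_ord_recl survival0 //.
under [X in _ = _ + a * (_ + X)]eq_bigr do rewrite survivalS //.
ring.
Qed.

Lemma stopped_mean_ge f L :
  (forall y, inSp y -> L <= f y) ->
  (forall y k l j, inSp y -> L <= f (shift y k l j)) ->
  forall n y, inSp y -> L <= stopped_mean f n y.
Proof.
move=> f_ge f_shift_ge; elim=> [|n IH] y Sy /=; first exact: f_ge.
rewrite Sy -(step_mean_cst L y); apply: ler_step_mean => k l j.
have [S'|S'] := boolP (inSp (shift y k l j)); first exact: IH.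
by rewrite stopped_mean_out ?(negbTE S') //; apply: f_shift_ge.
Qed.

Lemma survival_sum_le f a L y :
  a < 0 -> (forall z, inSp z -> step_mean f z = f z + a) ->
  (forall z, inSp z -> L <= f z) ->
  (forall z k l j, inSp z -> L <= f (shift z k l j)) ->
  inSp y -> forall T, \sum_(m < T) survival m y <= (f y - L) / - a.
Proof.
move=> a_lt0 f_drift f_ge f_shift_ge Sy T.
have := stopped_mean_ge f_ge f_shift_ge T Sy; rewrite (stopped_mean_drift f_drift).
by rewrite ler_pdivlMr ?oppr_gt0 // => ?; nra.
Qed.

Lemma survival_sum_bounded (pi : 'rV[R]_s0) (D : 'M[R]_s0) (d : 'I_3 -> 'I_3 -> int)
    (c : state s0 -> int) :
  \sum_j pi 0 j = 1 -> pi *m Astar A = pi -> irreducible_mx (Astar A) ->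
  (forall i j, D i j = \sum_k \sum_l (d k l)%:~R * A k l i j) ->
  (forall k l, -1 <= d k l) ->
  (forall y k l j, c (shift y k l j) = c y + d k l) ->
  (forall y, inSp y -> 0 <= c y) ->
  (pi *m D *m (const_mx 1 : 'cV[R]_s0)) 0 0 < 0 ->
  forall y, inSp y -> exists M, forall T, \sum_(m < T) survival m y <= M.
Proof.
move=> pi1 piA irr hD d_ge hc c_ge0 drift_lt0 y Sy.
set a := (pi *m D *m (const_mx 1 : 'cV[R]_s0)) 0 0 in drift_lt0.
have [h hh] := poisson_centered Astar_ge0 A_row1 irr (D *m const_mx 1) pi1 piA.
pose f z := (c z)%:~R + h z.2 0.
have f_drift z : inSp z -> step_mean f z = f z + a.
  move=> _; rewrite /f step_meanD step_mean_background.
  rewrite (step_mean_increment (d := fun k l => (d k l)%:~R)); last first.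
    by move=> k l j; rewrite hc intrD.
  have Dz : (D *m (const_mx 1 : 'cV[R]_s0)) z.2 0 = \sum_j \sum_k \sum_l (d k l)%:~R * A k l z.2 j.
    by rewrite mxE; apply: eq_bigr => j _; rewrite mxE mulr1 hD.
  by have := hh z.2; rewrite mulmxA -/a Dz; lra.
have h_ge j : - \sum_i `|h i 0| <= h j 0.
  rewrite lerNl; apply: le_trans (ler_norm _) _.
  by rewrite normrN (bigD1 j) //= lerDl; exact: sumr_ge0.
pose L := - \sum_i `|h i 0| - 1.
exists ((f y - L) / - a); apply: survival_sum_le drift_lt0 f_drift _ _ Sy.
  move=> z Sz; rewrite /f /L; have := h_ge z.2.
  have : 0 <= (c z)%:~R :> R by rewrite ler0z c_ge0.
  lra.
move=> z k l j Sz; rewrite /f /L hc.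
have -> : (shift z k l j).2 = j by [].
have := h_ge j; have : -1 <= (c z + d k l)%:~R :> R.
  have : -1 <= c z + d k l by have := c_ge0 z Sz; have := d_ge k l; lia.
  by rewrite -(ler_int R).
lra.
Qed.

Lemma esum_qtilde_le y (M : R) :
  (forall T, \sum_(m < T) survival m y <= M) ->
  (\esum_(y' in [set y' : state s0 | inSp y']) qtilde A y y' <= M%:E)%E.
Proof.
move=> hM.
apply: ge_ereal_sup => _ [X [finX XS] <-].
rewrite fsbig_finite //= /qtilde -nneseries_sum; last first.
  by move=> i j _; rewrite lee_fin; apply: killed_pn_ge0.
apply: lime_le.
  by apply: is_cvg_nneseries => n _ _; apply: sume_ge0 => i _; rewrite lee_fin killed_pn_ge0.
apply: nearW => T.
under eq_bigr do rewrite sumEFin.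
rewrite sumEFin lee_fin big_mkord.
apply: le_trans (hM T); apply: ler_sum => n _.
apply: sum_killed_pn_le_survival; exact: finmap.fset_uniq.
Qed.

End KilledWalk.

Unset Implicit Arguments.

Theorem proposition2p1 (R : realType) (s0 : nat) (A : 'I_3 -> 'I_3 -> 'M[R]_s0)
  (pi : 'rV[R]_s0)
  (hA0 : forall (k l : 'I_3) (i j : 'I_s0), 0 <= A k l i j)
  (hA1 : forall i : 'I_s0, \sum_(j : 'I_s0) Astar A i j = 1)
  (hpi0 : forall j : 'I_s0, 0 <= pi 0 j)
  (hpi1 : \sum_(j : 'I_s0) pi 0 j = 1)
  (hpistat : pi *m Astar A = pi)
  (hirr : irreducible_mmrw A)
  (haper : aperiodic_mmrw A)
  (hdrift : drift1 A pi < 0 \/ drift2 A pi < 0) :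
  forall y : state s0, inSp y ->
    (\esum_(y' in [set y' : state s0 | inSp y']) qtilde A y y' < +oo)%E.
Proof.
move=> y Sy.
have irrA := irreducible_background hA0 hirr.
have [M hM] : exists M : R, forall T, \sum_(m < T) survival A m y <= M.
  case: hdrift => drift_lt0.
  - apply: (survival_sum_bounded hA0 hA1 (D := - Arow A im1 + Arow A ip1)
      (d := fun k l => stp k) (c := fun z => z.1.1) hpi1 hpistat irrA) => //.
    + exact: row_drift_mxE.
    + by move=> k l; exact: stp_geN1.
    + by move=> z /andP[].
  - apply: (survival_sum_bounded hA0 hA1 (D := - Acol A im1 + Acol A ip1)
      (d := fun k l => stp l) (c := fun z => z.1.2) hpi1 hpistat irrA) => //.
    + exact: col_drift_mxE.
    + by move=> k l; exact: stp_geN1.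
    + by move=> z /andP[].
exact: le_lt_trans (esum_qtilde_le hA0 hM) (ltry M).
Qed.
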